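(* Let $R$ be a countable ring and $\mathcal L$ an elementary class of left $R$-modules. A module $M\in\mathcal L$ is strict $\mathcal L$-atomic if and only if every countable subset of $M$ is contained in a countable submodule $N$ of $M$ such that $N$ is locally split in $M$, $N\in\mathcal L$, and $N$ is strict $\mathcal L$-atomic.
   Context: Modules are left $R$-modules. An elementary class is a class of modules axiomatized by (finitary) first-order sentences in the language of left $R$-modules. pp formulas as usual. $(M,\bar m)$ is an $\mathcal L$-free realization of a pp formula $\phi$ if $\bar m\in\phi(M)$ and for every $L\in\mathcal L$ and $\bar c\in\phi(L)$ there is a homomorphism $M\to L$ sending $\bar m$ to $\bar c$; $M$ is strict $\mathcal L$-atomic if every finite tuple of $M$ is an $\mathcal L$-free realization of some pp formula. A submodule $N\subseteq M$ is locally split if for every finite tuple $\bar n$ in $N$ there is a homomorphism $g:M\to N$ with $g(\bar n)=\bar n$. *)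

From mathcomp Require Import all_boot all_algebra.
Set Implicit Arguments. Unset Strict Implicit. Unset Printing Implicit Defensive.
Import GRing.Theory.
Local Open Scope ring_scope.

Definition countable_type (T : Type) : Prop := exists f : T -> nat, injective f.
Definition countable_set (T : Type) (S : T -> Prop) : Prop :=
  exists f : T -> nat, forall x y, S x -> S y -> f x = f y -> x = y.

Section Modules.
Variable R : pzRingType.

Inductive term : Type :=
  | TVar of nat
  | TZero
  | TAdd of term & term
  | TOpp of term
  | TScale of R & term.

Inductive formula : Type :=
  | FEq of term & term
  | FFalse
  | FNot of formula
  | FAnd of formula & formula
  | FOr of formula & formula
  | FImp of formula & formula
  | FForall of nat & formula
  | FExists of nat & formula.

Fixpoint term_free (x : nat) (t : term) : Prop :=
  match t with
  | TVar y => x = y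
  | TZero => False
  | TAdd t1 t2 => term_free x t1 \/ term_free x t2
  | TOpp t1 => term_free x t1
  | TScale _ t1 => term_free x t1
  end.

Fixpoint formula_free (x : nat) (f : formula) : Prop :=
  match f with
  | FEq t1 t2 => term_free x t1 \/ term_free x t2
  | FFalse => False
  | FNot g => formula_free x g
  | FAnd g h | FOr g h | FImp g h => formula_free x g \/ formula_free x h
  | FForall y g | FExists y g => x <> y /\ formula_free x g
  end.

Definition sentence (f : formula) : Prop := forall x, ~ formula_free x f.

Definition upd (M : Type) (e : nat -> M) (n : nat) (v : M) : nat -> M :=
  fun k => if k == n then v else e k.

Fixpoint eval_term (M : lmodType R) (e : nat -> M) (t : term) : M :=
  match t with
  | TVar y => e y
  | TZero => 0
  | TAdd t1 t2 => eval_term e t1 + eval_term e t2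
  | TOpp t1 => - eval_term e t1
  | TScale r t1 => r *: eval_term e t1
  end.

Fixpoint sat (M : lmodType R) (e : nat -> M) (f : formula) : Prop :=
  match f with
  | FEq t1 t2 => eval_term e t1 = eval_term e t2
  | FFalse => False
  | FNot g => ~ sat e g
  | FAnd g h => sat e g /\ sat e h
  | FOr g h => sat e g \/ sat e h
  | FImp g h => sat e g -> sat e h
  | FForall n g => forall v : M, sat (upd e n v) g
  | FExists n g => exists v : M, sat (upd e n v) g
  end.

(* M |= f for a sentence f (the environment is irrelevant; we use 0) *)
Definition models (M : lmodType R) (f : formula) : Prop := sat (fun _ => (0 : M)) f.

Definition elementary (L : lmodType R -> Prop) : Prop :=
  exists T : formula -> Prop,
    (forall f, T f -> sentence f) /\
    (forall M : lmodType R, L M <-> (forall f, T f -> models M f)).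

Definition is_hom (M N : lmodType R) (f : M -> N) : Prop :=
  (forall x y, f (x + y) = f x + f y) /\ (forall (r : R) x, f (r *: x) = r *: f x).

(* A pp formula phi(x_0..x_{n-1}) :
     exists y_0..y_{m-1}, /\_{e<k}  sum_i A e i x_i + sum_j B e j y_j = 0 *)
Record ppf (n : nat) : Type := PPF {
  pp_m : nat;
  pp_k : nat;
  pp_A : 'I_pp_k -> 'I_n -> R;
  pp_B : 'I_pp_k -> 'I_pp_m -> R }.
Arguments pp_m {n}. Arguments pp_k {n}. Arguments pp_A {n}. Arguments pp_B {n}.

Definition pp_sat (n : nat) (phi : ppf n) (M : lmodType R) (x : 'I_n -> M) : Prop :=
  exists y : 'I_(pp_m phi) -> M,
    forall e : 'I_(pp_k phi),
      \sum_(i < n) pp_A phi e i *: x i + \sum_(j < pp_m phi) pp_B phi e j *: y j = 0.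

Definition free_realization (L : lmodType R -> Prop) (M : lmodType R)
    (n : nat) (m : 'I_n -> M) (phi : ppf n) : Prop :=
  pp_sat phi m /\
  forall (N : lmodType R), L N -> forall c : 'I_n -> N, pp_sat phi c ->
    exists f : M -> N, is_hom f /\ forall i, f (m i) = c i.

Definition strict_atomic (L : lmodType R -> Prop) (M : lmodType R) : Prop :=
  forall (n : nat) (m : 'I_n -> M), exists phi : ppf n, free_realization L m phi.

(* The submodule N of M, given by the injective homomorphism iota : N -> M
   (identifying N with its image), is locally split in M. *)
Definition locally_split (N M : lmodType R) (iota : N -> M) : Prop :=
  forall (n : nat) (v : 'I_n -> N),
    exists g : M -> N, is_hom g /\ forall i, g (iota (v i)) = v i.

End Modules.

Set Warnings "-notation-overridden -ambiguous-paths -redundant-canonical-projection -projection-no-head-constant".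
From HB Require Import structures.
From mathcomp Require Import all_boot all_algebra zify.
From Stdlib Require Import ClassicalEpsilon FunctionalExtensionality Classical.
Set Implicit Arguments. Unset Strict Implicit. Unset Printing Implicit Defensive.
Import GRing.Theory.
Local Open Scope ring_scope.

(* (<=) Given a tuple of M, put it in such a submodule N.  A free realization
   of its pp type in N, precomposed with a map M -> N fixing the tuple (local
   splitting), is a free realization in M.

   (=>) Given a countable S in M, take its Skolem hull N: the closure of S
   under choice functions for witnesses of all existential formulas and of all
   pp formulas.  Since R is countable, N is named by countably many syntactic
   terms, hence countable; by the Tarski-Vaught test N is an elementary
   submodule, so N is in L; and N reflects pp formulas.  Then for a tuple of
   N, its pp type in M holds in N, and the free realization in M provides both
   the splitting map M -> N and the maps N -> N' required for strict
   L-atomicity of N. *)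

Definition bool_of_prop (T : Type) (P : T -> Prop) : pred T :=
  fun x => if excluded_middle_informative (P x) then true else false.

Lemma bool_of_propP (T : Type) (P : T -> Prop) x : bool_of_prop P x <-> P x.
Proof. by rewrite /bool_of_prop; case: excluded_middle_informative. Qed.

Section SubmoduleOfPredicate.
Variables (R : pzRingType) (M : lmodType R) (P : pred M).
Hypothesis P0 : P 0.
Hypothesis PB : forall x y, P x -> P y -> P (x - y).
Hypothesis PZ : forall (r : R) x, P x -> P (r *: x).

Lemma pred_submod_closed : submod_closed P.
Proof.
split=> // r x y Px Py; rewrite -[y]opprK; apply: PB; first exact: PZ.
by rewrite -sub0r; apply: PB.
Qed.

HB.instance Definition _ := GRing.isSubmodClosed.Build R M P pred_submod_closed.
HB.instance Definition _ := [SubChoice_isSubLmodule of {x : M | P x} by <:].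

Definition submodule_of_pred : lmodType R := {x : M | P x}.
End SubmoduleOfPredicate.

Lemma submodule_exists (R : pzRingType) (M : lmodType R) (P : M -> Prop) :
  P 0 -> (forall x y, P x -> P y -> P (x - y)) ->
  (forall (r : R) x, P x -> P (r *: x)) ->
  exists (N : lmodType R) (iota : N -> M), is_hom iota /\ injective iota /\
    (forall y, P (iota y)) /\ (forall x, P x -> exists y, iota y = x).
Proof.
move=> P0 PB PZ; pose Pb := bool_of_prop P.
have Pb0 : Pb 0 by apply/bool_of_propP.
have PbB x y : Pb x -> Pb y -> Pb (x - y).
  by move=> /bool_of_propP ? /bool_of_propP ?; apply/bool_of_propP; apply: PB.
have PbZ (r : R) x : Pb x -> Pb (r *: x).
  by move=> /bool_of_propP ?; apply/bool_of_propP; apply: PZ.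
exists (submodule_of_pred Pb0 PbB PbZ), (fun x => sval x).
split=> //; split; first exact: val_inj.
split; first by move=> [y Py]; apply/bool_of_propP.
by move=> x /bool_of_propP Px; exists (exist _ x Px).
Qed.

Section Homomorphisms.
Variables (R : pzRingType) (M N : lmodType R) (f : M -> N).
Hypothesis f_hom : is_hom f.

Lemma hom0 : f 0 = 0.
Proof. case: f_hom => fD _; apply: (@addrI _ (f 0)); by rewrite -fD !addr0. Qed.

Lemma homN x : f (- x) = - f x.
Proof. case: f_hom => fD _; apply: (@addrI _ (f x)); by rewrite -fD !subrr hom0. Qed.

Lemma hom_sum I (r : seq I) (F : I -> M) :
  f (\sum_(i <- r) F i) = \sum_(i <- r) f (F i).
Proof. case: f_hom => fD _; exact: (big_morph f fD hom0). Qed.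

Lemma hom_lincomb n (a : 'I_n -> R) (x : 'I_n -> M) :
  f (\sum_(i < n) a i *: x i) = \sum_(i < n) a i *: f (x i).
Proof. case: f_hom => _ fZ; rewrite hom_sum; apply: eq_bigr => i _; exact: fZ. Qed.

Lemma hom_eval (e : nat -> M) t : eval_term (f \o e) t = f (eval_term e t).
Proof.
case: f_hom => fD fZ.
by elim: t => [y||a IHa b IHb|a IHa|r a IHa] /=; rewrite ?hom0 ?IHa ?IHb ?fD ?homN ?fZ.
Qed.

Lemma hom_pp n (phi : ppf R n) (x : 'I_n -> M) : pp_sat phi x -> pp_sat phi (f \o x).
Proof.
move=> [y Hy]; exists (f \o y) => e /=.
by rewrite -!hom_lincomb; case: f_hom => <- _; rewrite Hy hom0.
Qed.
End Homomorphisms.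

Lemma hom_comp (R : pzRingType) (A B C : lmodType R) (f : A -> B) (g : B -> C) :
  is_hom f -> is_hom g -> is_hom (g \o f).
Proof. by move=> [fD fZ] [gD gZ]; split=> * /=; rewrite ?fD ?gD ?fZ ?gZ. Qed.

(* Names of the elements of the Skolem hull: generators, the empty argument
   list, argument lists, a witness for an existential formula with given
   arguments, and the j-th witness of a pp formula at a given tuple. *)
Inductive hull_term (R : pzRingType) : Type :=
  | HGen of nat
  | HNil
  | HCons of hull_term R & hull_term R
  | HWitness of formula R & nat & hull_term R
  | HPpWitness (n : nat) of ppf R n & hull_term R & nat.

(* Over a countable ring, all syntactic objects are coded injectively by
   finite trees of natural numbers, a countable type. *)
Section Coding.
Variables (R : pzRingType) (code_R : R -> nat).
Hypothesis code_R_inj : injective code_R.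
Notation Leaf := GenTree.Leaf.
Notation Node := GenTree.Node.

Fixpoint code_term (t : term R) : GenTree.tree nat :=
  match t with
  | TVar y => Node 0 [:: Leaf y]
  | TZero => Node 1 [::]
  | TAdd a b => Node 2 [:: code_term a; code_term b]
  | TOpp a => Node 3 [:: code_term a]
  | TScale r a => Node 4 [:: Leaf (code_R r); code_term a]
  end.

Lemma code_term_inj : injective code_term.
Proof.
elim=> [y||a IHa b IHb|a IHa|r a IHa] [y'||a' b'|a'|r' a'] //=.
- by case=> ->.
- by case=> /IHa -> /IHb ->.
- by case=> /IHa ->.
- by case=> /code_R_inj -> /IHa ->.
Qed.

Fixpoint code_formula (f : formula R) : GenTree.tree nat :=
  match f with
  | FEq a b => Node 0 [:: code_term a; code_term b]
  | FFalse => Node 1 [::]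
  | FNot g => Node 2 [:: code_formula g]
  | FAnd g h => Node 3 [:: code_formula g; code_formula h]
  | FOr g h => Node 4 [:: code_formula g; code_formula h]
  | FImp g h => Node 5 [:: code_formula g; code_formula h]
  | FForall n g => Node 6 [:: Leaf n; code_formula g]
  | FExists n g => Node 7 [:: Leaf n; code_formula g]
  end.

Lemma code_formula_inj : injective code_formula.
Proof.
elim=> [a b||g IHg|g IHg h IHh|g IHg h IHh|g IHg h IHh|n g IHg|n g IHg]
  [a' b'||g'|g' h'|g' h'|g' h'|n' g'|n' g'] //=;
  by [case=> /code_term_inj -> /code_term_inj -> | case=> /IHg ->
     | case=> /IHg -> /IHh -> | case=> -> /IHg ->].
Qed.

Lemma enum_code_inj (T : finType) (F G : T -> R) :
  [seq Leaf (code_R (F p)) | p <- enum T] = [seq Leaf (code_R (G p)) | p <- enum T] ->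
  F = G.
Proof.
move=> /eq_in_map EFG; apply: functional_extensionality => p.
by have [/code_R_inj] := EFG p (mem_enum T p).
Qed.

Definition code_ppf n (phi : ppf R n) : GenTree.tree nat :=
  Node 0 [:: Leaf (pp_m phi); Leaf (pp_k phi);
    Node 0 [seq Leaf (code_R (@pp_A R n phi p.1 p.2)) | p <- enum {: 'I_(pp_k phi) * 'I_n}];
    Node 0 [seq Leaf (code_R (@pp_B R n phi p.1 p.2)) | p <- enum {: 'I_(pp_k phi) * 'I_(pp_m phi)}]].

Lemma code_ppf_inj n : injective (@code_ppf n).
Proof.
case=> m k A B [m' k' A' B'] [Em Ek]; subst m' k'.
move=> /enum_code_inj EA /enum_code_inj EB; congr PPF.
- by do 2 apply: functional_extensionality => ?; exact: (congr1 (fun F => F (_, _)) EA).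
- by do 2 apply: functional_extensionality => ?; exact: (congr1 (fun F => F (_, _)) EB).
Qed.

Definition child (i : nat) (t : GenTree.tree nat) : GenTree.tree nat :=
  if t is Node _ s then nth (Leaf 0) s i else Leaf 0.

Fixpoint code_hull_term (t : hull_term R) : GenTree.tree nat :=
  match t with
  | HGen k => Node 0 [:: Leaf k]
  | HNil => Node 1 [::]
  | HCons a b => Node 2 [:: code_hull_term a; code_hull_term b]
  | HWitness g n a => Node 3 [:: code_formula g; Leaf n; code_hull_term a]
  | HPpWitness n phi a j => Node 4 [:: Leaf n; code_ppf phi; code_hull_term a; Leaf j]
  end.

Lemma code_hull_term_inj : injective code_hull_term.
Proof.
elim=> [k||a IHa b IHb|g n a IHa|n phi a IHa j]
  [k'||a' b'|g' n' a'|n' phi' a' j'] //=.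
- by case=> ->.
- by case=> /IHa -> /IHb ->.
- by case=> /code_formula_inj -> -> /IHa ->.
- move=> E; have En : n = n' by case: E.
  subst n'; have /code_ppf_inj -> := congr1 (child 1) E.
  by have [/IHa -> ->] := congr1 (fun t => (child 2 t, child 3 t)) E.
Qed.
End Coding.

Section FiniteSupport.
Variable R : pzRingType.

Fixpoint term_bound (t : term R) : nat :=
  match t with
  | TVar y => y.+1
  | TZero => 0
  | TAdd a b => maxn (term_bound a) (term_bound b)
  | TOpp a | TScale _ a => term_bound a
  end.

Fixpoint formula_bound (f : formula R) : nat :=
  match f with
  | FEq a b => maxn (term_bound a) (term_bound b)
  | FFalse => 0
  | FNot g | FForall _ g | FExists _ g => formula_bound g
  | FAnd g h | FOr g h | FImp g h => maxn (formula_bound g) (formula_bound h)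
  end.

Variable M : lmodType R.

Definition agree_below (b : nat) (e e' : nat -> M) : Prop :=
  forall k, (k < b)%N -> e k = e' k.

Lemma agree_below_maxn b c e e' :
  agree_below (maxn b c) e e' -> agree_below b e e' /\ agree_below c e e'.
Proof. by move=> H; split=> k Hk; apply: H; lia. Qed.

Lemma agree_below_upd b e e' n v :
  agree_below b e e' -> agree_below b (upd e n v) (upd e' n v).
Proof. by move=> H k Hk; rewrite /upd; case: (k == n) => //; exact: H. Qed.

Lemma eval_agree (t : term R) e e' :
  agree_below (term_bound t) e e' -> eval_term e t = eval_term e' t.
Proof.
elim: t e e' => [y||a IHa b IHb|a IHa|r a IHa] e e' /= H.
- exact: H.
- done.
- by case/agree_below_maxn: H => /IHa -> /IHb ->.
- by rewrite (IHa _ _ H).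
- by rewrite (IHa _ _ H).
Qed.

Lemma sat_agree (g : formula R) e e' :
  agree_below (formula_bound g) e e' -> (sat e g <-> sat e' g).
Proof.
elim: g e e' => [a b||g IHg|g IHg h IHh|g IHg h IHh|g IHg h IHh|n g IHg|n g IHg]
  e e' /= H; try case/agree_below_maxn: H => /IHg Hg /IHh Hh.
- by case/agree_below_maxn: H => /eval_agree -> /eval_agree ->.
- done.
- by rewrite (IHg _ _ H).
- by rewrite Hg Hh.
- by rewrite Hg Hh.
- by rewrite Hg Hh.
- by split=> Hv v; apply/(IHg _ _ (agree_below_upd n v H)); apply: Hv.
- by split=> -[v Hv]; exists v; apply/(IHg _ _ (agree_below_upd n v H)).
Qed.
End FiniteSupport.

Section SkolemHull.
Variables (R : pzRingType) (M : lmodType R) (gen : nat -> M).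

(* A finite list read as an environment or as a tuple (0 beyond its end). *)
Definition env_of_list (l : seq M) : nat -> M := nth 0 l.

(* A witness v for g at the environment l, updated at n, if there is one. *)
Definition formula_witness (g : formula R) (n : nat) (l : seq M) : M :=
  epsilon (inhabits 0) (fun v => sat (upd (env_of_list l) n v) g).

Definition tuple_of_list n (l : seq M) : 'I_n -> M := fun i => nth 0 l i.
Arguments tuple_of_list : clear implicits.

Definition pp_witnesses n (phi : ppf R n) (x : 'I_n -> M) (y : 'I_(pp_m phi) -> M) :=
  forall e, \sum_(i < n) pp_A e i *: x i + \sum_(j < pp_m phi) pp_B e j *: y j = 0.

Definition pp_witness n (phi : ppf R n) (l : seq M) : 'I_(pp_m phi) -> M :=
  epsilon (inhabits (fun _ => 0)) (@pp_witnesses n phi (tuple_of_list n l)).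

(* A hull term denotes an element (first component) and, when built with
   [HCons], a list of arguments for the Skolem functions (second component). *)
Fixpoint eval_hull (t : hull_term R) : M * seq M :=
  match t with
  | HGen k => (gen k, [::])
  | HNil => (0, [::])
  | HCons a b => ((eval_hull a).1, (eval_hull a).1 :: (eval_hull b).2)
  | HWitness g n a => (formula_witness g n (eval_hull a).2, [::])
  | HPpWitness n phi a j =>
      (odflt 0 (omap (@pp_witness n phi (eval_hull a).2) (insub j)), [::])
  end.

Definition in_hull (x : M) : Prop := exists t, (eval_hull t).1 = x.

Lemma gen_in_hull k : in_hull (gen k).
Proof. by exists (HGen R k). Qed.

Lemma hull_arguments (l : seq M) :
  (forall k, (k < size l)%N -> in_hull (nth 0 l k)) -> exists t, (eval_hull t).2 = l.
Proof.
elim: l => [|x l IH] Hl; first by exists (HNil R).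
have [a Ea] := Hl 0%N isT.
have [b Eb] : exists b, (eval_hull b).2 = l by apply: IH => k; exact: (Hl k.+1).
by exists (HCons a b); rewrite /= Ea Eb.
Qed.

Lemma hull_formula_witness (g : formula R) (n : nat) (e : nat -> M) :
  (forall k, in_hull (e k)) -> (exists v, sat (upd e n v) g) ->
  exists v, in_hull v /\ sat (upd e n v) g.
Proof.
move=> He Hex; pose l := [seq e k | k <- iota 0 (formula_bound g)].
have agree v : agree_below (formula_bound g) (upd (env_of_list l) n v) (upd e n v).
  apply: agree_below_upd => k Hk.
  by rewrite /env_of_list /l (nth_map 0%N) ?size_iota // nth_iota.
have [t Et] : exists t, (eval_hull t).2 = l.
  apply: hull_arguments => k; rewrite size_map size_iota => Hk.
  by rewrite (nth_map 0%N) ?size_iota // nth_iota.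
exists (formula_witness g n l); split; first by exists (HWitness g n t); rewrite /= Et.
apply/(sat_agree (agree _)).
apply: (epsilon_spec (inhabits 0) (fun v => sat (upd (env_of_list l) n v) g)).
by case: Hex => v Hv; exists v; apply/(sat_agree (agree _)).
Qed.

Lemma hull_pp_witness n (phi : ppf R n) (x : 'I_n -> M) :
  (forall i, in_hull (x i)) -> pp_sat phi x ->
  exists y, (forall j, in_hull (y j)) /\ @pp_witnesses n phi x y.
Proof.
move=> Hx Hphi; pose l := [seq x i | i <- enum 'I_n].
have El : tuple_of_list n l = x.
  apply: functional_extensionality => i.
  by rewrite /tuple_of_list /l (nth_map i) ?size_enum_ord // nth_ord_enum.
have [t Et] : exists t, (eval_hull t).2 = l.
  apply: hull_arguments => k; rewrite size_map size_enum_ord => Hk.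
  by rewrite /l (nth_map (Ordinal Hk)) ?size_enum_ord // nth_enum_ord.
exists (@pp_witness n phi l); split.
  by move=> j; exists (HPpWitness phi t j); rewrite /= Et valK.
rewrite -El; apply: (epsilon_spec (inhabits (fun _ => 0))).
by rewrite El.
Qed.

(* The hull is a submodule: 0 is named by [HNil], and closure under
   subtraction and scaling are instances of the Tarski–Vaught witnesses for
   the formulas  x2 = x0 - x1  and  x1 = r x0. *)
Lemma hull0 : in_hull 0.
Proof. by exists (HNil R). Qed.

Lemma hullB x y : in_hull x -> in_hull y -> in_hull (x - y).
Proof.
move=> Hx Hy; pose e k := if k == 0%N then x else y.
have He k : in_hull (e k) by rewrite /e; case: (k == 0%N).
have [v [Hv]] := @hull_formula_witness
  (FEq (TVar R 2) (TAdd (TVar R 0) (TOpp (TVar R 1)))) 2 e He (ex_intro _ (x - y) erefl).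
by rewrite /= /upd /= => <-.
Qed.

Lemma hullZ (r : R) x : in_hull x -> in_hull (r *: x).
Proof.
move=> Hx.
have [v [Hv]] := @hull_formula_witness
  (FEq (TVar R 1) (TScale r (TVar R 0))) 1 (fun _ => x) (fun _ => Hx)
  (ex_intro _ (r *: x) erefl).
by rewrite /= /upd /= => <-.
Qed.

Lemma hull_countable (code_R : R -> nat) : injective code_R -> countable_set in_hull.
Proof.
move=> code_R_inj.
pose name x := epsilon (inhabits (HNil R)) (fun t => (eval_hull t).1 = x).
have nameP x : in_hull x -> (eval_hull (name x)).1 = x.
  exact: (epsilon_spec (inhabits (HNil R)) (fun t => (eval_hull t).1 = x)).
exists (fun x => pickle (code_hull_term code_R (name x))) => x y Hx Hy.
move=> /(pcan_inj pickleK_inv) /(code_hull_term_inj code_R_inj) E.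
by rewrite -(nameP x Hx) -(nameP y Hy) E.
Qed.
End SkolemHull.
Arguments pp_witnesses {R M n} phi x y.

Lemma comp_upd (T U : Type) (f : T -> U) (e : nat -> T) n v :
  f \o upd e n v = upd (f \o e) n (f v).
Proof. by apply: functional_extensionality => k; rewrite /upd /=; case: (k == n). Qed.

Section Embeddings.
Variables (R : pzRingType) (N M : lmodType R) (iota : N -> M).

Definition tarski_vaught : Prop :=
  forall g n (e : nat -> M), (forall k, exists y, iota y = e k) ->
    (exists v, sat (upd e n v) g) -> exists y, sat (upd e n (iota y)) g.

Definition elementary_embedding : Prop :=
  forall g (e : nat -> N), sat e g <-> sat (iota \o e) g.

Definition pp_reflecting : Prop :=
  forall n (phi : ppf R n) (v : 'I_n -> N), pp_sat phi (iota \o v) -> pp_sat phi v.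

Hypotheses (iota_hom : is_hom iota) (iota_inj : injective iota).

(* The Tarski–Vaught test, by induction on formulas; only the universal and
   existential quantifiers need the condition. *)
Lemma tarski_vaught_test : tarski_vaught -> elementary_embedding.
Proof.
move=> TV; elim=> [a b||g IHg|g IHg h IHh|g IHg h IHh|g IHg h IHh|n g IHg|n g IHg] e /=.
- by rewrite !hom_eval //; split=> [-> | /iota_inj].
- done.
- by rewrite IHg.
- by rewrite IHg IHh.
- by rewrite IHg IHh.
- by rewrite IHg IHh.
- have in_image k : exists y, iota y = (iota \o e) k by exists (e k).
  split=> [Hall w | Hall v]; last by rewrite IHg comp_upd.
  apply: NNPP => not_w.
  have [y /= Hy] := TV (FNot g) n _ in_image (ex_intro _ w not_w).
  by apply: Hy; rewrite -comp_upd -IHg.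
- have in_image k : exists y, iota y = (iota \o e) k by exists (e k).
  split=> [[v Hv] | [w Hw]]; first by exists (iota v); rewrite -comp_upd -IHg.
  have [y Hy] := TV g n _ in_image (ex_intro _ w Hw).
  by exists y; rewrite IHg comp_upd.
Qed.

Lemma elementary_class_closed (L : lmodType R -> Prop) :
  elementary L -> L M -> elementary_embedding -> L N.
Proof.
case=> T [_ HT] LM elem; apply/HT => f Tf.
have := proj1 (HT M) LM f Tf; rewrite /models elem.
suff -> : iota \o (fun _ : nat => (0 : N)) = (fun _ => 0) by [].
by apply: functional_extensionality => k /=; rewrite hom0.
Qed.

Lemma pp_reflecting_of_witnesses :
  (forall n (phi : ppf R n) (v : 'I_n -> N), pp_sat phi (iota \o v) ->
     exists w : 'I_(pp_m phi) -> N, pp_witnesses phi (iota \o v) (iota \o w)) ->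
  pp_reflecting.
Proof.
move=> wit n phi v /wit [w Hw]; exists w => e; apply: iota_inj.
have [iotaD _] := iota_hom; rewrite hom0 // iotaD !(hom_lincomb iota_hom); exact: (Hw e).
Qed.
End Embeddings.

Lemma countable_set_enum (T : Type) (x0 : T) (S : T -> Prop) :
  countable_set S -> exists gen : nat -> T, forall x, S x -> exists k, gen k = x.
Proof.
case=> code code_inj.
pose gen k := epsilon (inhabits x0) (fun x => S x /\ code x = k).
exists gen => x Sx; exists (code x).
have [Sgx Egx] : S (gen (code x)) /\ code (gen (code x)) = code x.
  by apply: (epsilon_spec (inhabits x0) (fun y => S y /\ code y = code x)); exists x.
exact: code_inj.
Qed.

(* Downward Löwenheim–Skolem, strengthened for pp formulas: over a countable
   ring, every countable subset of M lies in a countable elementary submodule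
   reflecting pp formulas, namely the Skolem hull of the subset. *)
Lemma countable_elementary_submodule (R : pzRingType) (HR : countable_type R)
    (M : lmodType R) (S : M -> Prop) :
  countable_set S ->
  exists (N : lmodType R) (iota : N -> M),
    [/\ is_hom iota, injective iota, forall x, S x -> exists y, iota y = x,
        countable_type N & elementary_embedding iota /\ pp_reflecting iota].
Proof.
move=> /(countable_set_enum 0) [gen Hgen]; case: HR => code_R code_R_inj.
have [N [iota [iota_hom [iota_inj [iota_in onto]]]]] :=
  submodule_exists (hull0 gen) (@hullB _ _ gen) (@hullZ _ _ gen).
have [code code_inj] := hull_countable gen code_R_inj.
have pre (x : M) (Hx : in_hull gen x) := constructive_indefinite_description _ (onto x Hx).
exists N, iota; split=> //.
- by move=> x /Hgen [k <-]; apply: onto; exact: gen_in_hull.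
- by exists (code \o iota) => a b /code_inj Hab; apply/iota_inj/Hab.
split.
  apply: tarski_vaught_test => // g n e He Hex.
  have He' k : in_hull gen (e k) by case: (He k) => y <-.
  have [v [/pre [y Ey] Hv]] := hull_formula_witness He' Hex.
  by exists y; rewrite Ey.
apply: pp_reflecting_of_witnesses => // n phi v Hphi.
have [w [Hw Ew]] := hull_pp_witness (fun i => iota_in (v i)) Hphi.
exists (fun j => sval (pre _ (Hw j))).
suff -> : iota \o (fun j => sval (pre _ (Hw j))) = w by [].
by apply: functional_extensionality => j; exact: (svalP (pre _ (Hw j))).
Qed.

(* A pp-reflecting submodule N in L of a strict L-atomic module M is strict
   L-atomic and locally split: the pp type of a tuple of N in M is realized
   by the same tuple in N, and the free realization in M yields both the
   homomorphisms required out of N and a splitting map M -> N. *)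
Lemma atomic_pp_reflecting_submodule (R : pzRingType) (L : lmodType R -> Prop)
    (N M : lmodType R) (iota : N -> M) :
  is_hom iota -> pp_reflecting iota -> L N -> strict_atomic L M ->
  locally_split iota /\ strict_atomic L N.
Proof.
move=> iota_hom pp_refl LN atM.
have type_in_N n (v : 'I_n -> N) : exists phi : ppf R n,
    pp_sat phi v /\ free_realization L (iota \o v) phi.
  have [phi free] := atM n (iota \o v).
  by exists phi; split; first exact: pp_refl (proj1 free).
split=> n v; have [phi [phi_v [_ free]]] := type_in_N n v.
  by have [g [g_hom Eg]] := free N LN v phi_v; exists g.
exists phi; split=> // N' LN' c phi_c.
have [f [f_hom Ef]] := free N' LN' c phi_c.
by exists (f \o iota); split; first exact: hom_comp.
Qed.

Lemma countable_tuple_range (T : eqType) n (m : 'I_n -> T) :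
  countable_set (fun x => exists i, m i = x).
Proof.
pose s := [seq m i | i <- enum 'I_n].
exists (index^~ s) => x y [i <-] [j <-] E.
have mem k : m k \in s by apply: map_f; rewrite mem_enum.
by rewrite -(nth_index (m i) (mem i)) E (nth_index _ (mem j)).
Qed.

(* Backward direction: a tuple of M lies in a locally split strict L-atomic
   submodule N; its free realization in N, composed with a splitting map
   M -> N, is a free realization in M. *)
Lemma strict_atomic_of_local_pieces (R : pzRingType) (L : lmodType R -> Prop)
    (M : lmodType R) :
  (forall S : M -> Prop, countable_set S ->
     exists (N : lmodType R) (iota : N -> M),
       is_hom iota /\ injective iota /\
       (forall x, S x -> exists y, iota y = x) /\
       countable_type N /\
       locally_split iota /\ L N /\ strict_atomic L N) -> strict_atomic L M.
Proof.
move=> pieces n m.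
have [N [iota [iota_hom [_ [cover [_ [split_iota [_ atN]]]]]]]] :=
  pieces _ (countable_tuple_range m).
have [v Ev] : exists v : 'I_n -> N, iota \o v = m.
  have pre i := constructive_indefinite_description _ (cover (m i) (ex_intro _ i erefl)).
  by exists (fun i => sval (pre i)); apply: functional_extensionality => i; exact: (svalP (pre i)).
have [phi [phi_v free_v]] := atN n v.
exists phi; split; first by rewrite -Ev; exact: hom_pp.
move=> N' LN' c phi_c.
have [f [f_hom Ef]] := free_v N' LN' c phi_c.
have [g [g_hom Eg]] := split_iota n v.
exists (f \o g); split; first exact: hom_comp.
by move=> i /=; rewrite -Ev /= Eg Ef.
Qed.

Theorem proposition5p4 (R : pzRingType) (HR : countable_type R)
    (L : lmodType R -> Prop) (HL : elementary L)
    (M : lmodType R) (HM : L M) :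
  strict_atomic L M <->
  (forall S : M -> Prop, countable_set S ->
     exists (N : lmodType R) (iota : N -> M),
       is_hom iota /\ injective iota /\
       (forall x, S x -> exists y, iota y = x) /\
       countable_type N /\
       locally_split iota /\ L N /\ strict_atomic L N).
Proof.
split; last exact: strict_atomic_of_local_pieces.
move=> atM S countS.
have [N [iota [iota_hom iota_inj cover countN [elem pp_refl]]]] :=
  countable_elementary_submodule HR countS.
have LN : L N := elementary_class_closed iota_hom HL HM elem.
have [split_iota atN] := atomic_pp_reflecting_submodule iota_hom pp_refl LN atM.
by exists N, iota.
Qed.
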